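(* Let $m$ and $n$ be odd positive integers with $\gcd(m,n)=1$. Then at least one of the sets $\{G_{m,t}: t\ge1\}$ and $\{G_{n,t}:t\ge1\}$ contains only finitely many boards of outcome class $V$.
   Context: Domineering is a two-player game played on a rectangular grid of unit squares. The players alternate placing dominoes, each covering two adjacent unoccupied squares; the player Vertical must place dominoes vertically (covering two squares in the same column), and the player Horizontal must place them horizontally (covering two squares in the same row). A player with no legal move on her turn loses. $G_{m,n}$ denotes the empty board with vertical dimension $m$ (number of rows) and horizontal dimension $n$ (number of columns). Every position has one of four outcome classes under optimal play: $V$ (Vertical wins whoever moves first), $H$ (Horizontal wins whoever moves first), $1$ (the player who moves first wins), $2$ (the player who moves second wins). *)

From mathcomp Require Import all_boot.
Set Implicit Arguments. Unset Strict Implicit. Unset Printing Implicit Defensive.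

(* Domineering on an m x n board (m rows, n columns). *)
Inductive player := Vert | Horz.
Definition other (p : player) : player :=
  match p with Vert => Horz | Horz => Vert end.

Inductive outcome_class := OV | OH | O1 | O2.

Section Board.
Variables m n : nat.
(* a cell is (row, column) *)
Definition cell := ('I_m * 'I_n)%type.

Definition domino (p : player) (c d : cell) : bool :=
  match p with
  | Vert => (c.2 == d.2) && (nat_of_ord d.1 == (nat_of_ord c.1).+1)
  | Horz => (c.1 == d.1) && (nat_of_ord d.2 == (nat_of_ord c.2).+1)
  end.

(* wins_fuel k p F : player p, to move on the position whose free cells are F,
   has a winning strategy (normal play). Correct whenever k >= #|F|, since each
   move removes two cells. *)
Fixpoint wins_fuel (k : nat) (p : player) (F : {set cell}) : bool :=
  if k is k'.+1 then
    [exists c : cell, exists d : cell,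
      [&& domino p c d, c \in F, d \in F &
          ~~ wins_fuel k' (other p) (F :\ c :\ d)]]
  else false.

Definition wins (p : player) (F : {set cell}) : bool := wins_fuel #|F| p F.

Definition outcome : outcome_class :=
  let F := [set: cell] in
  match wins Vert F, wins Horz F with
  | true, false => OV
  | false, true => OH
  | true, true => O1    (* first player wins *)
  | false, false => O2  (* second player wins *)
  end.
End Board.

From mathcomp Require Import all_boot zify.
From Stdlib Require Import Classical.
Set Implicit Arguments. Unset Strict Implicit. Unset Printing Implicit Defensive.

(* Call a board a V-board if it has outcome class V.  G_{m,w+2m} being a
   V-board forces G_{m,w} to be one: the two m x m squares in its last 2m
   columns are useless to Vertical, since Horizontal answers every vertical
   move in one square by the transposed move in the other.  Stacking V-boards
   of equal width gives a V-board, while a board and its transpose cannot both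
   be V-boards.  If both families contained arbitrarily wide V-boards, the
   Chinese remainder theorem (2m is coprime to n and 2n to m, by oddness) would
   give V-boards G_{m,t} and G_{n,s} with n | t and m | s; stacking copies of
   them gives the V-boards G_{s,t} and G_{t,s}, a contradiction. *)

Lemma otherK : involutive other.
Proof. by case. Qed.

Section SetRemoval.
Variable T : finType.
Implicit Types (A B : {set T}) (x : T).

Lemma setD1_notin A x : x \notin A -> A :\ x = A.
Proof. by move=> xA; apply/setDidPl; rewrite disjoint_sym disjoints1. Qed.

Lemma setUD1l A B x : x \notin B -> (A :|: B) :\ x = (A :\ x) :|: B.
Proof. by move=> xB; rewrite setDUl (setD1_notin xB). Qed.

Lemma setUD1r A B x : x \notin A -> (A :|: B) :\ x = A :|: (B :\ x).
Proof. by move=> xA; rewrite setUC setUD1l // setUC. Qed.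

Lemma setID1C A B x : x \in B -> (A :\ x) :&: ~: B = A :&: ~: B.
Proof. by move=> xB; rewrite setIDAC setD1_notin // !inE xB andbF. Qed.

Lemma imsetD1 (rT : finType) (f : T -> rT) A x :
  injective f -> f @: (A :\ x) = f @: A :\ f x.
Proof.
move=> f_inj; apply/setP => y; rewrite in_setD1.
apply/imsetP/andP => [[z] | [yfx /imsetP [z zA eyz]]].
- by rewrite in_setD1 => /andP [zx zA] ->; rewrite (inj_eq f_inj) zx imset_f.
- by exists z; rewrite // in_setD1 zA -(inj_eq f_inj) -eyz yfx.
Qed.

End SetRemoval.

Section Game.
Variables m n : nat.
Implicit Types (p : player) (c d : cell m n) (A F : {set cell m n}).

Lemma domino_neq p c d : domino p c d -> c != d.
Proof. by case: p => /andP [_]; apply: contraTneq => ->; rewrite ltn_eqF. Qed.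

Lemma cell_val_inj c d : nat_of_ord c.1 = d.1 -> nat_of_ord c.2 = d.2 -> c = d.
Proof. by case: c d => [a b] [a' b'] /= /val_inj -> /val_inj ->. Qed.

Lemma card_setD2_domino p c d F :
  domino p c d -> c \in F -> d \in F -> #|F| = #|F :\ c :\ d|.+2.
Proof.
move=> /domino_neq cd cF dF.
by rewrite (cardsD1 c) cF (cardsD1 d) in_setD1 eq_sym cd dF.
Qed.

Lemma card_setD2_domino_lt p c d F :
  domino p c d -> c \in F -> d \in F -> #|F :\ c :\ d| < #|F|.
Proof. by move=> cd cF dF; rewrite (card_setD2_domino cd cF dF). Qed.

Lemma wins_fuel0 k p : wins_fuel k p (set0 : {set cell m n}) = false.
Proof.
by case: k => //= k; apply/existsP => -[c /existsP [d]]; rewrite in_set0 andbF.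
Qed.

Lemma wins_fuel_enough k1 k2 p F :
  #|F| <= k1 -> #|F| <= k2 -> wins_fuel k1 p F = wins_fuel k2 p F.
Proof.
elim: k1 k2 p F => [|k1 IH] [|k2] p F //.
- by rewrite leqn0 cards_eq0 => /eqP -> _; rewrite !wins_fuel0.
- by move=> _; rewrite leqn0 cards_eq0 => /eqP ->; rewrite !wins_fuel0.
move=> le1 le2 /=; apply: eq_existsb => c; apply: eq_existsb => d.
case: (boolP (domino p c d)) => //= cd; case: (boolP (c \in F)) => //= cF.
case: (boolP (d \in F)) => //= dF.
by rewrite (IH k2) // -ltnS (leq_trans (card_setD2_domino_lt cd cF dF)).
Qed.

Lemma winsE p F :
  wins p F = [exists c, exists d, [&& domino p c d, c \in F, d \in F &
                                     ~~ wins (other p) (F :\ c :\ d)]].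
Proof.
rewrite /wins; case cardF: #|F| => [|k] /=.
  have -> : F = set0 by apply/eqP; rewrite -cards_eq0 cardF.
  by apply/esym/negbTE/existsP => -[c /existsP [d]]; rewrite in_set0 andbF.
apply: eq_existsb => c; apply: eq_existsb => d.
case: (boolP (domino p c d)) => //= cd; case: (boolP (c \in F)) => //= cF.
case: (boolP (d \in F)) => //= dF.
rewrite (@wins_fuel_enough k #|F :\ c :\ d|) // -ltnS -cardF.
exact: card_setD2_domino_lt cd cF dF.
Qed.

Lemma winsP p F :
  reflect (exists c d, [/\ domino p c d, c \in F, d \in F &
                          ~~ wins (other p) (F :\ c :\ d)])
          (wins p F).
Proof.
rewrite winsE; apply: (iffP existsP) => [[c /existsP [d /and4P [cd cF dF w]]]|].
  by exists c, d.
by move=> [c [d [cd cF dF w]]]; exists c; apply/existsP; exists d; apply/and4P.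
Qed.

Lemma not_wins_move p F c d : ~~ wins p F ->
  domino p c d -> c \in F -> d \in F -> wins (other p) (F :\ c :\ d).
Proof.
by move=> /winsP loses cd cF dF; apply/negPn/negP => w; apply: loses; exists c, d.
Qed.

Definition domino_closed p A := forall c d, domino p c d -> (c \in A) = (d \in A).

Lemma domino_closedC p A : domino_closed p A -> domino_closed p (~: A).
Proof. by move=> clA c d /clA; rewrite !inE => ->. Qed.

Lemma domino_closed_cols (P : pred nat) : domino_closed Vert [set x : cell m n | P x.2].
Proof. by move=> c d /andP [/eqP cd _]; rewrite !inE cd. Qed.

Lemma domino_closed_rows (P : pred nat) : domino_closed Horz [set x : cell m n | P x.1].
Proof. by move=> c d /andP [/eqP cd _]; rewrite !inE cd. Qed.

(* The opponent of [q] may play across the boundary of [A]; this only helps the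
   opponent, who answers inside the component where [q] moved. *)
Lemma not_wins_split q A F : domino_closed q A ->
  ~~ wins q (F :&: A) -> ~~ wins q (F :&: ~: A) -> ~~ wins q F.
Proof.
have [k] := ubnP #|F|; elim: k => // k IH in A F *; rewrite ltnS => leFk.
move=> clA lA lAc; apply/winsP => -[c [d [cd cF dF lFcd]]].
wlog cA : A clA lA lAc / c \in A.
  move=> wlog_A; case: (boolP (c \in A)) => cA; first exact: (wlog_A A).
  by apply: (wlog_A (~: A)); rewrite ?setCK ?inE //; apply: domino_closedC.
have dA : d \in A by rewrite -(clA _ _ cd).
have /winsP [e [g [eg]]] : wins (other q) ((F :&: A) :\ c :\ d).
  by apply: not_wins_move cd _ _; rewrite // inE ?cF ?dF.
rewrite -!setIDAC => /setIP [eF eA] /setIP [gF gA] lA'.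
move/negP: lFcd; apply; apply/winsP; exists e, g; split=> //.
rewrite otherK; apply: (IH A) => //.
- apply: leq_trans (card_setD2_domino_lt eg eF gF) _.
  exact: leq_trans (ltnW (card_setD2_domino_lt cd cF dF)) leFk.
- by rewrite otherK in lA'.
- by rewrite !setID1C.
Qed.

Lemma wins_split p A F : domino_closed (other p) A ->
  wins p (F :&: A) -> ~~ wins (other p) (F :&: ~: A) -> wins p F.
Proof.
move=> clA /winsP [c [d [cd /setIP [cF cA] /setIP [dF dA] lA]]] lAc.
apply/winsP; exists c, d; split=> //.
apply: (not_wins_split clA); last by rewrite !setID1C.
by rewrite !setIDAC.
Qed.

End Game.

Lemma wins_relabel m1 n1 m2 n2 (f : cell m1 n1 -> cell m2 n2) (q : player -> player) :
  injective f -> (forall p, q (other p) = other (q p)) ->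
  (forall p c d, domino (q p) (f c) (f d) = domino p c d) ->
  forall p (F : {set cell m1 n1}), wins (q p) (f @: F) = wins p F.
Proof.
move=> f_inj q_other f_domino p F.
have [k] := ubnP #|F|; elim: k => // k IH in p F *; rewrite ltnS => leFk.
apply/winsP/winsP => -[c [d [cd cF dF lcd]]].
- case/imsetP: cF lcd cd => {}c cF ->; case/imsetP: dF => {}d dF -> lcd.
  rewrite f_domino => cd; exists c, d; split=> //.
  have ltk := leq_trans (card_setD2_domino_lt cd cF dF) leFk.
  by rewrite -(IH (other p)) // !imsetD1 // q_other.
- have ltk := leq_trans (card_setD2_domino_lt cd cF dF) leFk.
  exists (f c), (f d); split; rewrite ?f_domino ?imset_f //.
  by rewrite -!imsetD1 // -q_other IH.
Qed.

Lemma wins_transpose m n p :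
  wins p [set: cell m n] = wins (other p) [set: cell n m].
Proof.
pose f (x : cell m n) : cell n m := (x.2, x.1).
have f_inj : injective f by move=> [a b] [c d] [-> ->].
have f_onto : f @: [set: cell m n] = [set: cell n m].
  by apply/setP => -[i j]; rewrite inE; apply/imsetP; exists (j, i).
by rewrite -f_onto (@wins_relabel _ _ _ _ f other) //; case.
Qed.

Definition rect (M N k a l b : nat) : {set cell M N} :=
  [set x : cell M N | (k <= x.1 < k + a) && (l <= x.2 < l + b)].

Lemma wins_rect M N k a l b p : k + a <= M -> l + b <= N ->
  wins p (rect M N k a l b) = wins p [set: cell a b].
Proof.
move=> leM leN.
have rowP (i : 'I_a) : k + i < M by have := ltn_ord i; lia.
have colP (j : 'I_b) : l + j < N by have := ltn_ord j; lia.
pose f (x : cell a b) : cell M N := (Ordinal (rowP x.1), Ordinal (colP x.2)).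
have f_inj : injective f.
  move=> [i j] [i' j'] [/addnI ei /addnI ej]; congr pair; exact: val_inj.
have f_onto : f @: [set: cell a b] = rect M N k a l b.
  apply/setP => -[i j]; rewrite inE /=; apply/imsetP/idP => [[x _ [-> ->]] /=|].
    by rewrite !leq_addr !ltn_add2l !ltn_ord.
  move=> /andP [/andP [ki ia] /andP [lj jb]].
  have i'P : i - k < a by lia.
  have j'P : j - l < b by lia.
  exists (Ordinal i'P, Ordinal j'P); first by rewrite inE.
  by apply: cell_val_inj => /=; lia.
rewrite -f_onto (@wins_relabel _ _ _ _ f id) // => -[] c d /=;
  by rewrite /domino -!val_eqE /= !eqn_add2l -addnS eqn_add2l.
Qed.

(* [sig] exchanges the halves [R :&: H] and [R :\: H] of [R]; as a vertical
   domino lies in a single half, Horizontal's mirrored answer never meets it. *)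
Section Mirror.
Variables m n : nat.
Variables R H : {set cell m n}.
Variable sig : cell m n -> cell m n.
Hypothesis R_closed : domino_closed Vert R.
Hypothesis H_closed : domino_closed Vert H.
Hypothesis sig_R : {in R, forall x, sig x \in R}.
Hypothesis sig_H : {in R, forall x, (sig x \in H) = (x \notin H)}.
Hypothesis sigK : {in R, involutive sig}.
Hypothesis sig_domino :
  {in R &, forall c d, domino Vert c d -> domino Horz (sig c) (sig d)}.

Lemma sig_eq : {in R &, forall x y, (sig x == y) = (x == sig y)}.
Proof. by move=> x y xR yR; apply/eqP/eqP => [<-|->]; rewrite sigK ?sig_R. Qed.

Lemma sig_neq x y : x \in R -> (x \in H) = (y \in H) -> sig x != y.
Proof.
by move=> xR xyH; apply/eqP => sxy; move: xyH; rewrite -sxy sig_H //; case: (x \in H).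
Qed.

Definition mirrored (E : {set cell m n}) :=
  E \subset R /\ {in R, forall x, (sig x \in E) = (x \in E)}.

Lemma mirrored_reply E c d : mirrored E -> domino Vert c d -> c \in E -> d \in E ->
  [/\ sig c \in E :\ c :\ d, sig d \in E :\ c :\ d, domino Horz (sig c) (sig d)
    & mirrored (E :\ c :\ d :\ sig c :\ sig d)].
Proof.
move=> [sER sigE] cd cE dE.
have cR : c \in R by apply: (subsetP sER).
have dR : d \in R by rewrite -(R_closed cd).
have cdH : (c \in H) = (d \in H) := H_closed cd.
split.
- by rewrite !in_setD1 sig_neq // sig_neq // sigE.
- by rewrite !in_setD1 sig_neq // sig_neq -?cdH // sigE.
- exact: sig_domino.
split; first by apply/subsetP => x; rewrite !in_setD1 => /and5P [_ _ _ _ /(subsetP sER)].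
move=> x xR; rewrite !in_setD1 sigE // !sig_eq ?sig_R // !sigK //.
by do 4!case: (x == _).
Qed.

Lemma mirrored_answer (F E : {set cell m n}) c d : F \subset ~: R -> mirrored E ->
  domino Vert c d -> c \in E -> d \in E -> ~~ wins Horz ((F :|: E) :\ c :\ d) ->
  exists E', [/\ mirrored E', #|F :|: E'| < #|F :|: E| & wins Vert (F :|: E')].
Proof.
move=> sFR mE cd cE dE lcd; have [sER _] := mE.
have notF x : x \in R -> x \notin F.
  by move=> xR; apply: contraL xR => /(subsetP sFR); rewrite inE.
have [scE sdE scd mE'] := mirrored_reply mE cd cE dE.
have [cR dR] : c \in R /\ d \in R by rewrite !(subsetP sER).
have [scR sdR] : sig c \in R /\ sig d \in R by rewrite !sig_R.
have scFE : sig c \in F :|: E :\ c :\ d by rewrite inE scE orbT.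
have sdFE : sig d \in F :|: E :\ c :\ d by rewrite inE sdE orbT.
have cFE : c \in F :|: E by rewrite inE cE orbT.
have dFE : d \in F :|: E by rewrite inE dE orbT.
have lt_cd := card_setD2_domino_lt cd cFE dFE.
have lt_sig := card_setD2_domino_lt scd scFE sdFE.
rewrite !setUD1r ?notF // in lcd lt_cd lt_sig.
exists (E :\ c :\ d :\ sig c :\ sig d); split=> //; first exact: ltn_trans lt_sig lt_cd.
by have := not_wins_move lcd scd scFE sdFE; rewrite !setUD1r ?notF.
Qed.

Lemma mirrored_union_useless (F E : {set cell m n}) : F \subset ~: R -> mirrored E ->
  (wins Vert (F :|: E) -> wins Vert F) /\ (~~ wins Horz (F :|: E) -> ~~ wins Horz F).
Proof.
have [k] := ubnP #|F :|: E|; elim: k => // k IH in F E *; rewrite ltnS => leFEk.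
move=> sFR mE; have [sER _] := mE.
have notE x : x \in F -> x \notin E.
  by move=> /(subsetP sFR); rewrite inE; apply: contra => /(subsetP sER).
have sFcdR c d : F :\ c :\ d \subset ~: R.
  by apply/subsetP => x; rewrite !in_setD1 => /and3P [_ _ /(subsetP sFR)].
have IH_move p c d : domino p c d -> c \in F -> d \in F ->
    (wins Vert (F :\ c :\ d :|: E) -> wins Vert (F :\ c :\ d)) /\
    (~~ wins Horz (F :\ c :\ d :|: E) -> ~~ wins Horz (F :\ c :\ d)).
  move=> cd cF dF; apply: IH (sFcdR c d) mE.
  have cFE : c \in F :|: E by rewrite inE cF.
  have dFE : d \in F :|: E by rewrite inE dF.
  by rewrite -!setUD1l ?notE // (leq_trans (card_setD2_domino_lt cd cFE dFE)).
split.
- case/winsP => c [d [cd cFE dFE lcd]].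
  case/setUP: cFE => [cF | cE].
    have dF : d \in F.
      case/setUP: dFE => // dE; move/(subsetP sFR): cF.
      by rewrite inE (R_closed cd) (subsetP sER _ dE).
    apply/winsP; exists c, d; split=> //.
    by apply: (proj2 (IH_move _ _ _ cd cF dF)); rewrite -!setUD1l ?notE.
  have dE : d \in E.
    case/setUP: dFE => // dF; move/(subsetP sFR): dF.
    by rewrite inE -(R_closed cd) (subsetP sER _ cE).
  have [E' [mE' ltE' wE']] := mirrored_answer sFR mE cd cE dE lcd.
  exact: (proj1 (IH F E' (leq_trans ltE' leFEk) sFR mE')).
apply: contra => /winsP [c [d [cd cF dF lcd]]].
apply/winsP; exists c, d; split; rewrite ?inE ?cF ?dF //.
by rewrite !setUD1l ?notE //; apply: contra lcd; apply: (proj1 (IH_move _ _ _ cd cF dF)).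
Qed.

End Mirror.

(* The cells of G_{m,w+2m} in columns [w, w+m) and [w+m, w+2m) form two m x m
   squares; [swap_squares] maps the cell (i, w+j) of the first one to the cell
   (j, w+m+i) of the second one and back, fixing the first w columns. *)
Section SquarePair.
Variables m w : nat.
Local Notation cellW := (cell m (w + m + m)).

Definition swap_squares (x : cellW) : cellW :=
  let i := nat_of_ord x.1 in let j := nat_of_ord x.2 in
  if w <= j then
    if j < w + m then (insubd x.1 (j - w), insubd x.2 (w + m + i))
    else (insubd x.1 (j - w - m), insubd x.2 (w + i))
  else x.

Definition square_pair : {set cellW} := [set x : cellW | w <= x.2].
Definition left_of_second : {set cellW} := [set x : cellW | x.2 < w + m].

Lemma swap_squares_first (x : cellW) : w <= x.2 -> x.2 < w + m ->
  nat_of_ord (swap_squares x).1 = x.2 - w /\ nat_of_ord (swap_squares x).2 = w + m + x.1.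
Proof.
move=> wx xwm; rewrite /swap_squares wx xwm /= !val_insubd.
by have := ltn_ord x.1; have := ltn_ord x.2; do 2!case: ifP; lia.
Qed.

Lemma swap_squares_second (x : cellW) : w + m <= x.2 ->
  nat_of_ord (swap_squares x).1 = x.2 - w - m /\ nat_of_ord (swap_squares x).2 = w + x.1.
Proof.
move=> xwm; have wx : w <= x.2 by lia.
rewrite /swap_squares wx ltnNge xwm /= !val_insubd.
by have := ltn_ord x.1; have := ltn_ord x.2; do 2!case: ifP; lia.
Qed.

Lemma swap_squares_pair : {in square_pair, forall x, swap_squares x \in square_pair}.
Proof.
move=> x; rewrite !inE => wx; case: (ltnP x.2 (w + m)) => xwm.
  by have [_ ->] := swap_squares_first wx xwm; lia.
by have [_ ->] := swap_squares_second xwm; lia.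
Qed.

Lemma swap_squares_exchange : {in square_pair,
  forall x, (swap_squares x \in left_of_second) = (x \notin left_of_second)}.
Proof.
move=> x; rewrite !inE => wx; case: (ltnP x.2 (w + m)) => xwm.
  by have [_ ->] := swap_squares_first wx xwm; lia.
by have [_ ->] := swap_squares_second xwm; rewrite ltn_add2l ltn_ord.
Qed.

Lemma swap_squaresK : {in square_pair, involutive swap_squares}.
Proof.
move=> x; rewrite inE => wx; case: (ltnP x.2 (w + m)) => xwm.
  have [e1 e2] := swap_squares_first wx xwm.
  have [|f1 f2] := @swap_squares_second (swap_squares x); first by rewrite e2 leq_addr.
  by apply: cell_val_inj; rewrite ?f1 ?f2 ?e1 ?e2; lia.
have [e1 e2] := swap_squares_second xwm.
have [||f1 f2] := @swap_squares_first (swap_squares x).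
- by rewrite e2 leq_addr.
- by rewrite e2 ltn_add2l.
by apply: cell_val_inj; rewrite ?f1 ?f2 ?e1 ?e2 ?addKn // -subnDA subnKC.
Qed.

Lemma swap_squares_domino : {in square_pair &, forall c d,
  domino Vert c d -> domino Horz (swap_squares c) (swap_squares d)}.
Proof.
move=> c d; rewrite !inE => wc wd /andP [/eqP cd2 /eqP dc1]; rewrite /domino.
case: (ltnP c.2 (w + m)) => cwm.
  have dwm : d.2 < w + m by rewrite -cd2.
  have [e1 e2] := swap_squares_first wc cwm; have [f1 f2] := swap_squares_first wd dwm.
  by rewrite -val_eqE /= e1 e2 f1 f2 cd2 dc1 -addnS !eqxx.
have dwm : w + m <= d.2 by rewrite -cd2.
have [e1 e2] := swap_squares_second cwm; have [f1 f2] := swap_squares_second dwm.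
by rewrite -val_eqE /= e1 e2 f1 f2 cd2 dc1 -addnS !eqxx.
Qed.

End SquarePair.

Definition classV m n :=
  wins Vert [set: cell m n] && ~~ wins Horz [set: cell m n].

Lemma outcome_OV m n : outcome m n = OV -> classV m n.
Proof. by rewrite /outcome /classV; case: (wins Vert _); case: (wins Horz _). Qed.

Lemma classV_transpose m n : classV m n -> ~~ classV n m.
Proof. by case/andP => Vmn _; rewrite negb_and (wins_transpose n m Horz) Vmn orbT. Qed.

Lemma classV_shrink m w : classV m (w + m + m) -> classV m w.
Proof.
have left_rect : ~: square_pair m w = rect m (w + m + m) 0 m 0 w.
  by apply/setP => x; rewrite !inE /= ltn_ord -ltnNge.
have mirrored_pair : mirrored (square_pair m w) (@swap_squares m w) (square_pair m w).
  by split=> // x xR; rewrite xR swap_squares_pair.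
have [toV toH] := mirrored_union_useless (domino_closed_cols (leq w))
  (domino_closed_cols (ltn^~ (w + m))) (@swap_squares_pair m w)
  (@swap_squares_exchange m w) (@swap_squaresK m w) (@swap_squares_domino m w)
  (subxx _) mirrored_pair.
have le_w : 0 + w <= w + m + m by rewrite -addnA leq_addr.
rewrite setUC setUCr left_rect !wins_rect ?le_w // in toV toH.
by rewrite /classV => /andP [/toV -> /toH].
Qed.

Lemma classV_shrink_mod m t t0 :
  t0 <= t -> t0 = t %[mod m + m] -> classV m t -> classV m t0.
Proof.
move=> le_t0 /esym/eqP; rewrite eqn_mod_dvd // => /dvdnP [k def_t].
have -> : t = t0 + k * (m + m) by rewrite -def_t subnKC.
elim: k {def_t} => [|k IH]; first by rewrite mul0n addn0.
by rewrite mulSn (addnC (m + m)) !addnA => /classV_shrink.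
Qed.

Lemma classV_stack a b W : classV a W -> classV b W -> classV (a + b) W.
Proof.
pose top := [set x : cell (a + b) W | x.1 < a].
have top_rect : top = rect (a + b) W 0 a 0 W.
  by apply/setP => x; rewrite !inE /= ltn_ord andbT.
have bottom_rect : ~: top = rect (a + b) W a b 0 W.
  by apply/setP => x; rewrite !inE /= ?add0n !ltn_ord !andbT ltnNge negbK.
have top_closed : domino_closed (other Vert) top := domino_closed_rows (ltn^~ a).
rewrite /classV => /andP [Va Ha] /andP [Vb Hb]; apply/andP; split.
  by apply: (wins_split top_closed);
    rewrite setTI ?bottom_rect ?top_rect wins_rect // leq_addr.
by apply: (not_wins_split top_closed);
  rewrite setTI ?bottom_rect ?top_rect wins_rect // leq_addr.
Qed.

Lemma classV_stack_dvd m s W : m %| s -> 0 < s -> classV m W -> classV s W.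
Proof.
case/dvdnP => k ->; rewrite muln_gt0 => /andP [k_gt0 _] Vm.
elim: k k_gt0 => [|[|k] IH] // _; first by rewrite mul1n.
by rewrite mulSn classV_stack // IH.
Qed.

Lemma crt_small_multiple M n t : coprime M n -> 0 < M * n ->
  exists t0, [/\ 0 < t0, t0 < (M * n).*2, t0 = t %[mod M] & n %| t0].
Proof.
move=> co Mn_gt0; pose c := chinese M n t 0.
exists (c %% (M * n) + M * n); split.
- by rewrite addn_gt0 Mn_gt0 orbT.
- by rewrite -addnn ltn_add2r ltn_pmod.
- by rewrite addnC [M * n]mulnC modnMDl (modn_dvdm _ (dvdn_mull _ (dvdnn M))) chinese_modl.
- by rewrite /dvdn addnC modnMDl (modn_dvdm _ (dvdn_mull _ (dvdnn n))) chinese_modr ?mod0n.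
Qed.

Lemma classV_width_multiple m n t : odd n -> coprime m n -> 0 < m ->
  4 * m * n <= t -> classV m t -> exists t0, [/\ 0 < t0, n %| t0 & classV m t0].
Proof.
move=> odd_n co m_gt0 le_t Vt.
have co2 : coprime (m + m) n by rewrite addnn -mul2n coprimeMl coprime2n odd_n.
have [|t0 [t0_gt0 lt_t0 eq_t0 dvd_t0]] := crt_small_multiple t co2.
  by rewrite muln_gt0 addn_gt0 m_gt0 odd_gt0.
exists t0; split=> //; apply: classV_shrink_mod Vt => //.
by move: lt_t0 le_t; rewrite -addnn; lia.
Qed.

Theorem proposition3p6 (m n : nat) :
  odd m -> odd n -> 0 < m -> 0 < n -> coprime m n ->
  (exists B : nat, forall t : nat, 1 <= t -> outcome m t = OV -> t < B) \/
  (exists B : nat, forall t : nat, 1 <= t -> outcome n t = OV -> t < B).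
Proof.
move=> odd_m odd_n m_gt0 n_gt0 co.
have large_V_exclusive t s :
    4 * m * n <= t -> 4 * n * m <= s -> classV m t -> classV n s -> False.
  move=> le_t le_s Vt Vs.
  have [t0 [t0_gt0 n_t0 Vt0]] := classV_width_multiple odd_n co m_gt0 le_t Vt.
  have co' : coprime n m by rewrite coprime_sym.
  have [s0 [s0_gt0 m_s0 Vs0]] := classV_width_multiple odd_m co' n_gt0 le_s Vs.
  have := classV_transpose (classV_stack_dvd m_s0 s0_gt0 Vt0).
  by rewrite (classV_stack_dvd n_t0 t0_gt0 Vs0).
have [[t [le_t OVt]] | noV] :=
  classic (exists t, 4 * m * n <= t /\ outcome m t = OV); [right | left];
  exists (4 * m * n) => s _ OVs; rewrite ltnNge; apply/negP => le_s.
- apply: (large_V_exclusive t s le_t _ (outcome_OV OVt) (outcome_OV OVs)).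
  by rewrite mulnAC.
- by apply: noV; exists s.
Qed.
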